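(* If $\widetilde{\sigma}_{AB},\widetilde{\sigma}'_{AB}\in\widetilde{S}_{AB}$ have a common upper bound, their supremum exists in $\widetilde{S}_{AB}$ and $$\widetilde{\sigma}_{AB}\sqcup_{\widetilde{S}_{AB}}\widetilde{\sigma}'_{AB}=\inf^{\widetilde{S}_{AB}}\big(\underline{\widetilde{\sigma}_{AB}}\cap\underline{\widetilde{\sigma}'_{AB}}\big),$$ where for $\sigma\in\widetilde{S}_{AB}$, $\underline{\sigma}$ denotes the set of pure states of $\widetilde{S}_{AB}$ (elements $\sigma_A\widetilde{\otimes}\sigma_B$ with $\sigma_A,\sigma_B$ pure) lying above $\sigma$.
   Context: $(\mathfrak{S}_A,\mathfrak{E}_A,\epsilon^{\mathfrak{S}_A})$, $(\mathfrak{S}_B,\mathfrak{E}_B,\epsilon^{\mathfrak{S}_B})$ are States/Effects Chu spaces valued in $\mathfrak{B}=\{\mathbf{Y},\mathbf{N},\bot\}$ (meet $\wedge$, product $\bullet$: $x\bullet\mathbf{Y}=x$, $x\bullet\mathbf{N}=\mathbf{N}$, $\bot\bullet\bot=\bot$), whose spaces of states admit a description in terms of pure states (completely meet-irreducible elements = maximal elements, generating every state as infimum). The minimal tensor product $\widetilde{S}_{AB}$ consists of the maps $\inf^{\widetilde{S}_{AB}}_{i\in I}\sigma_{i,A}\widetilde{\otimes}\sigma_{i,B}:(\mathfrak{l}_A,\mathfrak{l}_B)\mapsto\bigwedge_{i\in I}\epsilon^{\mathfrak{S}_A}_{\mathfrak{l}_A}(\sigma_{i,A})\bullet\epsilon^{\mathfrak{S}_B}_{\mathfrak{l}_B}(\sigma_{i,B})$,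 ordered pointwise; every element of $\widetilde{S}_{AB}$ is the infimum of the pure tensors of pure states above it. *)

Set Implicit Arguments.

Inductive Bval : Type := BY | BN | Bbot.

Definition Ble (x y : Bval) : Prop := x = Bbot \/ x = y.

Definition Bprod (x y : Bval) : Bval :=
  match x, y with
  | _, BY => x
  | _, BN => BN
  | BY, Bbot => Bbot
  | BN, Bbot => BN
  | Bbot, Bbot => Bbot
  end.

Definition lower_bound {X : Type} (le : X -> X -> Prop) (P : X -> Prop) (x : X) :=
  forall y, P y -> le x y.
Definition upper_bound {X : Type} (le : X -> X -> Prop) (P : X -> Prop) (x : X) :=
  forall y, P y -> le y x.
Definition is_inf {X : Type} (le : X -> X -> Prop) (P : X -> Prop) (x : X) :=
  lower_bound le P x /\ forall z, lower_bound le P z -> le z x.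
Definition is_maximal {X : Type} (le : X -> X -> Prop) (x : X) :=
  forall y, le x y -> y = x.
Definition completely_meet_irreducible {X : Type} (le : X -> X -> Prop) (x : X) :=
  forall P : X -> Prop, is_inf le P x -> P x.

Record SEChu : Type := {
  St : Type;
  Ef : Type;
  sle : St -> St -> Prop;
  sle_refl : forall s, sle s s;
  sle_trans : forall s t u, sle s t -> sle t u -> sle s u;
  sle_antisym : forall s t, sle s t -> sle t s -> s = t;
  sinf_exists : forall P : St -> Prop, (exists s, P s) -> exists s, is_inf sle P s;
  eps : Ef -> St -> Bval;
  eps_inf : forall (l : Ef) (P : St -> Prop) (s : St),
      (exists x, P x) -> is_inf sle P s ->
      is_inf Ble (fun b => exists x, P x /\ b = eps l x) (eps l s);
  (* pure states: completely meet-irreducible elements = maximal elements *)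
  cmi_maximal : forall s, completely_meet_irreducible sle s <-> is_maximal sle s;
  pure_generating : forall s, is_inf sle (fun p => is_maximal sle p /\ sle s p) s
}.

Definition pure (A : SEChu) (s : St A) : Prop := is_maximal (@sle A) s.

(** Candidate elements of the minimal tensor product: maps E_A x E_B -> B. *)
Definition TMap (A B : SEChu) : Type := Ef A -> Ef B -> Bval.

Definition Tle {A B : SEChu} (f g : TMap A B) : Prop :=
  forall lA lB, Ble (f lA lB) (g lA lB).

Definition tens {A B : SEChu} (sA : St A) (sB : St B) : TMap A B :=
  fun lA lB => Bprod (@eps A lA sA) (@eps B lB sB).

(** Elements of the minimal tensor product \tilde S_AB:
    inf_{i in I} sigma_{i,A} (x) sigma_{i,B}  for a nonempty family,
    i.e. (lA,lB) |-> /\_{i in I} eps_lA(sigma_{i,A}) * eps_lB(sigma_{i,B}).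
    The family is represented by the (nonempty) set [F] of its pairs. *)
Definition in_Smin {A B : SEChu} (f : TMap A B) : Prop :=
  exists F : St A -> St B -> Prop,
    (exists sA sB, F sA sB) /\
    forall lA lB,
      is_inf Ble (fun b => exists sA sB, F sA sB /\ b = tens sA sB lA lB) (f lA lB).

Definition pure_tensor {A B : SEChu} (t : TMap A B) : Prop :=
  exists (sA : St A) (sB : St B), pure A sA /\ pure B sB /\ t = tens sA sB.

Definition pure_above {A B : SEChu} (s : TMap A B) (t : TMap A B) : Prop :=
  pure_tensor t /\ Tle s t.

Definition is_sup_Smin {A B : SEChu} (s s' u : TMap A B) : Prop :=
  in_Smin u /\ Tle s u /\ Tle s' u /\
  forall v, in_Smin v -> Tle s v -> Tle s' v -> Tle u v.

(** inf^{\tilde S_AB} of a set U of elements: pointwise infimum. *)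
Definition is_inf_Smin {A B : SEChu} (U : TMap A B -> Prop) (u : TMap A B) : Prop :=
  forall lA lB, is_inf Ble (fun b => exists t, U t /\ b = t lA lB) (u lA lB).

(** The product of B commutes with infima of nonempty families, and every state
    is the infimum of the pure states above it; hence every element of the
    minimal tensor product is the pointwise infimum of the pure tensors of pure
    states above it.  Any upper bound w of s and s' therefore has all of its
    pure tensors among the common pure tensors above s and s', so the infimum u
    of the latter lies below w.  Since u is itself an infimum of a nonempty
    family of pure tensors, it belongs to the minimal tensor product, and it
    lies above s and s'. *)

From Stdlib Require Import Classical IndefiniteDescription.

Set Implicit Arguments.
Unset Strict Implicit.

Lemma is_inf_ext (X : Type) (le : X -> X -> Prop) (P Q : X -> Prop) (x : X) :
  (forall y, P y <-> Q y) -> is_inf le P x -> is_inf le Q x.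
Proof.
  intros E [Hlb Hglb]; split.
  - intros y Hy; apply Hlb, E, Hy.
  - intros z Hz; apply Hglb; intros y Hy; apply Hz, E, Hy.
Qed.

Lemma Ble_refl (x : Bval) : Ble x x.
Proof. right; reflexivity. Qed.

Lemma Ble_trans (x y z : Bval) : Ble x y -> Ble y z -> Ble x z.
Proof. intros [->| ->] H; [left|]; auto. Qed.

Lemma Ble_nonbot_eq (c y : Bval) : c <> Bbot -> Ble c y -> y = c.
Proof. intros Hc [E|E]; congruence. Qed.

Lemma Bprod_mono (x x' y y' : Bval) :
  Ble x x' -> Ble y y' -> Ble (Bprod x y) (Bprod x' y').
Proof. intros [->| ->] [->| ->]; destruct x', y'; simpl; unfold Ble; auto. Qed.

Lemma Bprod_eq_Y (x y : Bval) : Bprod x y = BY -> x = BY /\ y = BY.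
Proof. destruct x, y; simpl; intros E; split; congruence. Qed.

Lemma Bprod_eq_N (x y : Bval) : Bprod x y = BN -> x = BN \/ y = BN.
Proof. destruct x, y; simpl; intros E; auto; discriminate. Qed.

Lemma Bval_inf_exists (P : Bval -> Prop) :
  (exists y, P y) -> exists x, is_inf Ble P x.
Proof.
  intros [y0 Hy0].
  destruct (classic (exists c, c <> Bbot /\ forall y, P y -> y = c))
    as [[c [Hc Hall]]|Hnot].
  - exists c; split.
    + intros y Hy; rewrite (Hall y Hy); apply Ble_refl.
    + intros z Hz; rewrite <- (Hall y0 Hy0); apply Hz, Hy0.
  - exists Bbot; split; [intros y _; left; reflexivity|].
    intros z Hz; destruct (classic (z = Bbot)) as [E|E]; [left; exact E|].
    exfalso; apply Hnot; exists z; split; [exact E|].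
    intros y Hy; exact (Ble_nonbot_eq E (Hz y Hy)).
Qed.

Lemma is_inf_Ble_const (P : Bval -> Prop) (a c : Bval) :
  is_inf Ble P a -> c <> Bbot -> (forall y, P y -> y = c) -> a = c.
Proof.
  intros [_ Hglb] Hc Hall; apply Ble_nonbot_eq; [exact Hc|].
  apply Hglb; intros y Hy; rewrite (Hall y Hy); apply Ble_refl.
Qed.

Lemma Bprod_is_inf (P Q : Bval -> Prop) (a b : Bval) :
  (exists x, P x) -> (exists y, Q y) -> is_inf Ble P a -> is_inf Ble Q b ->
  is_inf Ble (fun c => exists x y, P x /\ Q y /\ c = Bprod x y) (Bprod a b).
Proof.
  intros [x0 Px0] [y0 Qy0] HP HQ; split.
  { intros c (x & y & Px & Qy & ->); apply Bprod_mono; [apply HP|apply HQ]; auto. }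
  intros z Hz; destruct (classic (z = Bbot)) as [->|Hnb]; [left; reflexivity|].
  assert (Hprod : forall x y, P x -> Q y -> Bprod x y = z).
  { intros x y Px Qy; apply Ble_nonbot_eq; [exact Hnb|].
    apply Hz; exists x, y; auto. }
  destruct z; [| |congruence].
  - assert (Ha : a = BY).
    { apply (is_inf_Ble_const HP); [discriminate|].
      intros x Px; exact (proj1 (Bprod_eq_Y (Hprod x y0 Px Qy0))). }
    assert (Hb : b = BY).
    { apply (is_inf_Ble_const HQ); [discriminate|].
      intros y Qy; exact (proj2 (Bprod_eq_Y (Hprod x0 y Px0 Qy))). }
    rewrite Ha, Hb; apply Ble_refl.
  - destruct (classic (forall x, P x -> x = BN)) as [HN|HN].
    + assert (Ha : a = BN) by (apply (is_inf_Ble_const HP); [discriminate|exact HN]).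
      rewrite Ha; destruct b; apply Ble_refl.
    + apply not_all_ex_not in HN; destruct HN as [x1 HN].
      apply imply_to_and in HN; destruct HN as [Px1 Hx1].
      assert (Hb : b = BN).
      { apply (is_inf_Ble_const HQ); [discriminate|].
        intros y Qy; destruct (Bprod_eq_N (Hprod x1 y Px1 Qy)); [contradiction|auto]. }
      rewrite Hb; destruct a; apply Ble_refl.
Qed.

Definition pure_above_st (A : SEChu) (s p : St A) : Prop := pure A p /\ sle A s p.

Section PureStates.

Variable A : SEChu.

(* If no pure state lies above s, then s is the infimum of the empty family,
   i.e. the top element, hence itself maximal. *)
Lemma pure_above_st_exists (s : St A) : exists p, pure_above_st s p.
Proof.
  destruct (classic (exists p, pure_above_st s p)) as [H|H]; [exact H|].
  assert (Htop : forall z, sle A z s).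
  { intros z; apply (proj2 (pure_generating A s)).
    intros y Hy; exfalso; apply H; exists y; exact Hy. }
  exists s; split; [|apply sle_refl].
  intros y Hy; apply sle_antisym; auto.
Qed.

Lemma eps_is_inf_pure_above (l : Ef A) (s : St A) :
  is_inf Ble (fun b => exists p, pure_above_st s p /\ b = eps A l p) (eps A l s).
Proof.
  apply eps_inf; [|apply pure_generating].
  destruct (pure_above_st_exists s) as [p Hp]; exists p; exact Hp.
Qed.

End PureStates.

Section MinimalTensor.

Variables A B : SEChu.

Lemma Tle_trans (f g h : TMap A B) : Tle f g -> Tle g h -> Tle f h.
Proof. intros Hfg Hgh lA lB; eapply Ble_trans; [apply Hfg|apply Hgh]. Qed.

Lemma tens_is_inf_pure_above (sA : St A) (sB : St B) lA lB :
  is_inf Ble (fun b => exists pA pB, pure_above_st sA pA /\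
                pure_above_st sB pB /\ b = tens pA pB lA lB)
    (tens sA sB lA lB).
Proof.
  destruct (pure_above_st_exists sA) as [pA HpA].
  destruct (pure_above_st_exists sB) as [pB HpB].
  eapply is_inf_ext; [|apply Bprod_is_inf;
    [| |apply eps_is_inf_pure_above|apply eps_is_inf_pure_above]].
  - intros b; split.
    + intros (x & y & (qA & HqA & ->) & (qB & HqB & ->) & ->); exists qA, qB; auto.
    + intros (qA & qB & HqA & HqB & ->).
      exists (eps A lA qA), (eps B lB qB); repeat split; eauto.
  - exists (eps A lA pA), pA; auto.
  - exists (eps B lB pB), pB; auto.
Qed.

Lemma Tle_tens_pure_above (sA pA : St A) (sB pB : St B) :
  pure_above_st sA pA -> pure_above_st sB pB -> Tle (tens sA sB) (tens pA pB).
Proof.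
  intros HpA HpB lA lB; apply (proj1 (tens_is_inf_pure_above sA sB lA lB)).
  exists pA, pB; auto.
Qed.

Lemma pure_above_trans (s v t : TMap A B) :
  Tle s v -> pure_above v t -> pure_above s t.
Proof. intros Hsv [Ht Hvt]; split; [exact Ht|exact (Tle_trans Hsv Hvt)]. Qed.

Section Generators.

Variables (F : St A -> St B -> Prop) (w : TMap A B).
Hypothesis w_inf : forall lA lB,
  is_inf Ble (fun b => exists sA sB, F sA sB /\ b = tens sA sB lA lB) (w lA lB).

Lemma pure_above_tens_generator (qA pA : St A) (qB pB : St B) :
  F qA qB -> pure_above_st qA pA -> pure_above_st qB pB ->
  pure_above w (tens pA pB).
Proof.
  intros Fq [HpA HqpA] [HpB HqpB]; split; [exists pA, pB; auto|].
  apply Tle_trans with (tens qA qB).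
  - intros lA lB; apply (proj1 (w_inf lA lB)); exists qA, qB; auto.
  - apply Tle_tens_pure_above; split; auto.
Qed.

End Generators.

Lemma in_Smin_pure_above_exists (w : TMap A B) :
  in_Smin w -> exists t, pure_above w t.
Proof.
  intros (F & (qA & qB & Fq) & Hw).
  destruct (pure_above_st_exists qA) as [pA HpA].
  destruct (pure_above_st_exists qB) as [pB HpB].
  exists (tens pA pB); eapply pure_above_tens_generator; eauto.
Qed.

Lemma in_Smin_is_inf_pure_above (w : TMap A B) :
  in_Smin w -> is_inf_Smin (pure_above w) w.
Proof.
  intros (F & _ & Hw) lA lB; split.
  { intros y (t & [_ Hwt] & ->); apply Hwt. }
  intros z Hz; apply (proj2 (Hw lA lB)); intros y (qA & qB & Fq & ->).
  apply (proj2 (tens_is_inf_pure_above qA qB lA lB)).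
  intros y (pA & pB & HpA & HpB & ->).
  apply Hz; exists (tens pA pB); split; [|reflexivity].
  eapply pure_above_tens_generator; eauto.
Qed.

Lemma is_inf_Smin_exists (U : TMap A B -> Prop) :
  (exists t, U t) -> exists u, is_inf_Smin U u.
Proof.
  intros [t0 Ht0].
  destruct (functional_choice (fun (l : Ef A * Ef B) x =>
      is_inf Ble (fun b => exists t, U t /\ b = t (fst l) (snd l)) x)) as [f Hf].
  { intros [lA lB]; apply Bval_inf_exists; exists (t0 lA lB), t0; auto. }
  exists (fun lA lB => f (lA, lB)); intros lA lB; exact (Hf (lA, lB)).
Qed.

Lemma in_Smin_is_inf_pure_tensors (U : TMap A B -> Prop) (u : TMap A B) :
  (exists t, U t) -> (forall t, U t -> pure_tensor t) ->
  is_inf_Smin U u -> in_Smin u.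
Proof.
  intros [t0 Ht0] Hpure Hu.
  exists (fun pA pB => U (tens pA pB)); split.
  - destruct (Hpure t0 Ht0) as (pA & pB & _ & _ & E).
    exists pA, pB; rewrite <- E; exact Ht0.
  - intros lA lB; eapply is_inf_ext; [|apply Hu].
    intros b; split.
    + intros (t & Ht & ->).
      destruct (Hpure t Ht) as (pA & pB & _ & _ & ->); exists pA, pB; auto.
    + intros (pA & pB & Ht & ->); exists (tens pA pB); auto.
Qed.

Lemma Tle_is_inf_Smin (U : TMap A B -> Prop) (s u : TMap A B) :
  is_inf_Smin U u -> (forall t, U t -> Tle s t) -> Tle s u.
Proof.
  intros Hu Hs lA lB; apply (proj2 (Hu lA lB)).
  intros y (t & Ht & ->); apply Hs, Ht.
Qed.

Lemma is_inf_Smin_le_subset (U V : TMap A B -> Prop) (u v : TMap A B) :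
  is_inf_Smin U u -> is_inf_Smin V v -> (forall t, V t -> U t) -> Tle u v.
Proof.
  intros Hu Hv HVU; apply (Tle_is_inf_Smin Hv).
  intros t Ht lA lB; apply (proj1 (Hu lA lB)); exists t; auto.
Qed.

End MinimalTensor.

Theorem mainTheorem14 (A B : SEChu) (s s' : TMap A B) :
  in_Smin s -> in_Smin s' ->
  (exists v, in_Smin v /\ Tle s v /\ Tle s' v) ->
  exists u, is_sup_Smin s s' u /\
            is_inf_Smin (fun t => pure_above s t /\ pure_above s' t) u.
Proof.
  (* only the common upper bound is needed, not membership of s and s' *)
  intros _ _ (v & Hv & Hsv & Hs'v).
  set (U := fun t : TMap A B => pure_above s t /\ pure_above s' t).
  assert (HU : exists t, U t).
  { destruct (in_Smin_pure_above_exists Hv) as [t Ht].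
    exists t; split; eapply pure_above_trans; eauto. }
  destruct (is_inf_Smin_exists HU) as [u Hu].
  exists u; split; [|exact Hu].
  split; [|split; [|split]].
  - apply (in_Smin_is_inf_pure_tensors HU); [intros t [[Ht _] _]; exact Ht|exact Hu].
  - apply (Tle_is_inf_Smin Hu); intros t [[_ Ht] _]; exact Ht.
  - apply (Tle_is_inf_Smin Hu); intros t [_ [_ Ht]]; exact Ht.
  - intros w Hw Hsw Hs'w.
    apply (is_inf_Smin_le_subset Hu (in_Smin_is_inf_pure_above Hw)).
    intros t Ht; split; eapply pure_above_trans; eauto.
Qed.
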